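(* Let $f\colon X\to Y$ be a morphism in $G\mathbf{BornCoarse}$. Assume that $f$ is a weak coarse equivalence and that there exists an entourage $U$ of $Y$ such that for every $y\in Y$ there is $x\in X$ with $f(x)\in U[\{y\}]$, $G_x\subseteq G_y$ and $|G_y/G_x|<\infty$, where $G_x,G_y$ denote stabilizers. Then $\mathrm{LF}(f)$ is almost surjective.
   Context: $G\mathbf{BornCoarse}$: $G$-sets with $G$-coarse structure (entourages; invariant ones cofinal) and compatible $G$-bornology; morphisms equivariant, controlled, proper. $f$ is a weak coarse equivalence if, after forgetting the $G$-action, there is a controlled proper $g\colon Y\to X$ with $f g$, $g f$ close to the identities (two maps $f_0,f_1$ are close if $(f_0\times f_1)(\mathrm{diag})$ is an entourage). $\mathrm{LF}(X)$ is the set of $G$-invariant subsets $L$ with $|L\cap B|<\infty$ for every bounded $B$. A multivalued map $s\colon L\to H$ is a subset $s\subseteq L\times H$ projecting surjectively onto $L$; it is surjective if it projects surjectively onto $H$; setting $L_h=\{\ell:(\ell,h)\in s\}$, $\tilde L=\bigsqcup_{h\in H}L_h$ with natural maps $q\colon\tilde L\to L$ and $\tilde s\colon \tilde L\to H$, $s$ is proper if $q$ and $\tilde s$ have finite fibres, and equivariant if $s$ is $G$-invariant. $L\in\mathrm{LF}(X)$ is an $f$-shadow of $H\in\mathrm{LF}(Y)$ if there is a proper surjective equivariant multivalued map $s\colon L\to H$ with $(f\times\mathrm{id}_Y)(s)$ an entourage of $Y$. $\mathrm{LF}(f)$ is almost surjective if every $H\in\mathrm{LF}(Y)$ admits an $f$-shadow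 in $\mathrm{LF}(X)$. *)

From mathcomp Require Import all_boot.
From mathcomp Require Import boolp classical_sets cardinality.
Set Implicit Arguments. Unset Strict Implicit. Unset Printing Implicit Defensive.
Local Open Scope classical_set_scope.

Record group := Group {
  gcar :> Type;
  gmul : gcar -> gcar -> gcar;
  gone : gcar;
  ginv : gcar -> gcar;
  gmulA : forall a b c, gmul a (gmul b c) = gmul (gmul a b) c;
  gmul1g : forall a, gmul gone a = a;
  gmulg1 : forall a, gmul a gone = a;
  gmulVg : forall a, gmul (ginv a) a = gone;
  gmulgV : forall a, gmul a (ginv a) = gone }.

Definition diag (X : Type) : set (X * X) := [set p | p.1 = p.2].
Definition rel_inv (X : Type) (U : set (X * X)) : set (X * X) :=
  [set p | U (p.2, p.1)].
Definition rel_comp (X : Type) (U V : set (X * X)) : set (X * X) :=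
  [set p | exists y, U (p.1, y) /\ V (y, p.2)].
Definition thicken (X : Type) (U : set (X * X)) (A : set X) : set X :=
  [set x | exists2 a, A a & U (x, a)].

Record GBornCoarse (G : group) := MkGBC {
  pt :> Type;
  act : G -> pt -> pt;
  act1 : forall x, act (gone G) x = x;
  actM : forall g h x, act (gmul g h) x = act g (act h x);
  entourage : set (set (pt * pt));
  bounded : set (set pt);
  ent_diag : entourage (@diag pt);
  ent_sub : forall U V, entourage U -> V `<=` U -> entourage V;
  ent_union : forall U V, entourage U -> entourage V -> entourage (U `|` V);
  ent_inv : forall U, entourage U -> entourage (rel_inv U);
  ent_comp : forall U V, entourage U -> entourage V -> entourage (rel_comp U V);
  ent_Ginv_cofinal : forall U, entourage U ->
     exists2 V, entourage V /\
       (forall g x y, V (x, y) -> V (act g x, act g y)) & U `<=` V;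
  bnd_cover : forall x, exists2 B, bounded B & B x;
  bnd_sub : forall A B, bounded B -> A `<=` B -> bounded A;
  bnd_union : forall A B, bounded A -> bounded B -> bounded (A `|` B);
  bnd_Ginv : forall g B, bounded B -> bounded (act g @` B);
  bnd_compat : forall U B, entourage U -> bounded B -> bounded (thicken U B) }.

Arguments act {G} X g x : rename.
Arguments entourage {G} X _ : rename.
Arguments bounded {G} X _ : rename.

Section Morphisms.
Variables (G : group) (X Y : GBornCoarse G).

Definition equivariant (f : X -> Y) := forall g x, f (act X g x) = act Y g (f x).
Definition controlled (f : X -> Y) :=
  forall U, entourage X U -> entourage Y ((fun p => (f p.1, f p.2)) @` U).
Definition proper_map (f : X -> Y) :=
  forall B, bounded Y B -> bounded X (f @^-1` B).
Definition is_morphism (f : X -> Y) := [/\ equivariant f, controlled f & proper_map f].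
End Morphisms.

Definition close (G : group) (Z : Type) (Y : GBornCoarse G) (f0 f1 : Z -> Y) :=
  entourage Y [set (f0 z, f1 z) | z in [set: Z]].

(* Weak coarse equivalence (ignoring the G-action). *)
Definition weak_coarse_equiv (G : group) (X Y : GBornCoarse G) (f : X -> Y) :=
  exists g : Y -> X, [/\ controlled g, proper_map g,
     close (f \o g) id & close (g \o f) id].

Definition G_invariant (G : group) (X : GBornCoarse G) (L : set X) :=
  forall g x, L x -> L (act X g x).
Definition LF (G : group) (X : GBornCoarse G) : set (set X) :=
  [set L | G_invariant L /\ forall B, bounded X B -> finite_set (L `&` B)].
Arguments LF {G} X _.

(* Multivalued maps s : L -> H, represented as subsets of X * Y. *)
Section Multivalued.
Variables (G : group) (X Y : GBornCoarse G).
Implicit Types (L : set X) (H : set Y) (s : set (X * Y)).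

Definition multivalued L H s :=
  s `<=` L `*` H /\ forall l, L l -> exists h, s (l, h).
Definition mv_surjective H s := forall h, H h -> exists l, s (l, h).
(* q : tilde L -> L and tilde s : tilde L -> H have finite fibres *)
Definition mv_proper s :=
  (forall l, finite_set [set h | s (l, h)]) /\
  (forall h, finite_set [set l | s (l, h)]).
Definition mv_equivariant s :=
  forall g l h, s (l, h) -> s (act X g l, act Y g h).

Definition shadow (f : X -> Y) L H :=
  exists s, [/\ multivalued L H s, mv_surjective H s, mv_proper s,
     mv_equivariant s & entourage Y ((fun p => (f p.1, p.2)) @` s)].

Definition LF_almost_surjective (f : X -> Y) :=
  forall H, LF Y H -> exists2 L, LF X L & shadow f L H.
End Multivalued.

Definition stab (G : group) (X : GBornCoarse G) (x : X) : set G :=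
  [set g | act X g x = x].
Arguments stab {G X} x.
Definition finite_index (G : group) (K H : set G) :=
  finite_set [set C : set G | exists2 a, H a & C = [set gmul a k | k in K]].

(* Pick a representative r in each G-orbit of H and, for each r, a point x_r
   with f x_r close to r and G_{x_r} of finite index in G_r.  The shadow is
   the G-saturation s = { (g x_r, g r) }, controlled by any invariant
   entourage containing U.  The points h related to a given l are finite in
   number because H is locally finite and f l is close to each of them; the
   points related to h = g r form g G_r x_r, finite by the index condition.
   The domain of s is locally finite since a weak coarse equivalence maps
   bounded sets to bounded sets. *)

From mathcomp Require Import all_boot.
From mathcomp Require Import boolp classical_sets cardinality.
From Stdlib Require Import ClassicalEpsilon.

Set Implicit Arguments.
Unset Strict Implicit.
Unset Printing Implicit Defensive.
Local Open Scope classical_set_scope.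

Section Orbits.
Variables (G : group) (X : GBornCoarse G).

Lemma actK (g : G) : cancel (act X g) (act X (ginv g)).
Proof. by move=> x; rewrite -actM gmulVg act1. Qed.

Definition orbit (x : X) : set X := range (act X ^~ x).

Lemma orbit_act (g : G) (x : X) : orbit (act X g x) = orbit x.
Proof.
apply/seteqP; split => _ [h _ <-].
- by exists (gmul h g); rewrite ?actM.
- by exists (gmul h (ginv g)); rewrite ?actM ?actK.
Qed.

Definition orbit_rep (x : X) : X := epsilon (inhabits x) (orbit x).

Lemma orbit_rep_in (x : X) : orbit x (orbit_rep x).
Proof. by apply: epsilon_spec; exists x; exists (gone G); rewrite ?act1. Qed.

Lemma orbit_rep_act (g : G) (x : X) : orbit_rep (act X g x) = orbit_rep x.
Proof.
by rewrite /orbit_rep orbit_act (Prop_irrelevance (inhabits (act X g x)) (inhabits x)).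
Qed.

Lemma orbit_rep_idem (x : X) : orbit_rep (orbit_rep x) = orbit_rep x.
Proof. by have [g _ gx] := orbit_rep_in x; rewrite -{1}gx orbit_rep_act. Qed.

Lemma orbit_rep_act_inj (g g' : G) (r r' : X) :
  orbit_rep r = r -> orbit_rep r' = r' -> act X g r = act X g' r' -> r = r'.
Proof.
by move=> rrep r'rep grr'; rewrite -rrep -r'rep -(orbit_rep_act g) grr' orbit_rep_act.
Qed.

Lemma bounded_set1 (x : X) : bounded X [set x].
Proof. by have [B bB Bx] := bnd_cover x; apply: (bnd_sub bB) => _ ->. Qed.

Lemma finite_index_orbit (x : X) (K : set G) :
  finite_index (stab x) K -> finite_set (act X ^~ x @` K).
Proof.
pose pick (C : set G) := epsilon (inhabits (gone G)) C.
move=> /(finite_image (fun C => act X (pick C) x)); apply: sub_finite_set.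
move=> _ [k Kk <-]; set C := [set gmul k k' | k' in stab x].
have : C (pick C).
  by apply: epsilon_spec; exists (gmul k (gone G)), (gone G) => //; apply: act1.
move=> [k' k'x kk']; exists C; first by exists k.
by rewrite -kk' actM k'x.
Qed.

End Orbits.

Lemma weak_coarse_equiv_bounded_image (G : group) (X Y : GBornCoarse G)
    (f : X -> Y) (B : set X) :
  weak_coarse_equiv f -> bounded X B -> bounded Y (f @` B).
Proof.
move=> [g [_ g_proper _ gf_close]] bB.
apply: (bnd_sub (g_proper _ (bnd_compat gf_close bB))).
by move=> _ [b Bb <-]; exists b => //; exists b.
Qed.

Section ControlledMultivalued.
Variables (G : group) (X Y : GBornCoarse G) (f : X -> Y).
Variables (V : set (Y * Y)) (L : set X) (H : set Y) (s : set (X * Y)).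
Hypotheses (V_ent : entourage Y V) (s_mv : multivalued L H s).
Hypothesis s_controlled : forall l h, s (l, h) -> V (f l, h).
Hypothesis H_lf : forall B, bounded Y B -> finite_set (H `&` B).

Lemma mv_image_finite (l : X) : finite_set [set h | s (l, h)].
Proof.
apply: (sub_finite_set _ (H_lf (bnd_compat (ent_inv V_ent) (bounded_set1 (f l))))).
move=> h slh; split; first by have [/(_ _ slh) []] := s_mv.
by exists (f l) => //; apply: s_controlled.
Qed.

Lemma mv_domain_locally_finite :
  (forall B, bounded X B -> bounded Y (f @` B)) ->
  (forall h, finite_set [set l | s (l, h)]) ->
  forall B, bounded X B -> finite_set (L `&` B).
Proof.
move=> f_bounded s_fin B bB.
have HBfin := H_lf (bnd_compat (ent_inv V_ent) (f_bounded _ bB)).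
apply: (sub_finite_set _ (bigcup_finite HBfin (fun h _ => s_fin h))).
move=> l [Ll Bl]; have [s_sub s_total] := s_mv; have [h slh] := s_total l Ll.
exists h => //; split; first by have [] := s_sub _ slh.
by exists (f l); [exists l | apply: s_controlled].
Qed.

End ControlledMultivalued.

Section OrbitShadow.
Variables (G : group) (X Y : GBornCoarse G) (f : X -> Y) (V : set (Y * Y)).
Variables (near : Y -> X) (H : set Y).
Hypothesis f_equivariant : equivariant f.
Hypothesis V_invariant : forall g y z, V (y, z) -> V (act Y g y, act Y g z).
Hypothesis near_close : forall y, V (f (near y), y).
Hypothesis near_finite_index : forall y, finite_index (stab (near y)) (stab y).
Hypothesis H_invariant : G_invariant H.

Definition orbit_reps : set Y := [set r | H r /\ orbit_rep r = r].

Definition orbit_shadow : set (X * Y) :=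
  [set (act X g (near r), act Y g r) | g in [set: G] & r in orbit_reps].

Definition orbit_shadow_domain : set X := fst @` orbit_shadow.

Lemma orbit_shadow_multivalued :
  multivalued orbit_shadow_domain H orbit_shadow.
Proof.
split=> [[l h] slh|l [[l' h] slh <-]]; last by exists h.
split; first by exists (l, h).
by case: slh => g _ [r [Hr _] [_ <-]]; apply: H_invariant.
Qed.

Lemma orbit_shadow_surjective : mv_surjective H orbit_shadow.
Proof.
move=> h Hh; have [k _ kr] := orbit_rep_in h.
have reps_r : orbit_reps (orbit_rep h).
  by split; [rewrite -kr; apply: H_invariant | apply: orbit_rep_idem].
exists (act X (ginv k) (near (orbit_rep h))), (ginv k) => //.
by exists (orbit_rep h) => //; rewrite -kr actK.
Qed.

Lemma orbit_shadow_equivariant : mv_equivariant orbit_shadow.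
Proof.
move=> g l h [g' _ [r reps_r [<- <-]]].
by exists (gmul g g') => //; exists r => //; rewrite !actM.
Qed.

Lemma orbit_shadow_controlled l h : orbit_shadow (l, h) -> V (f l, h).
Proof.
by move=> [g _ [r _ [<- <-]]]; rewrite f_equivariant; apply/V_invariant/near_close.
Qed.

Lemma orbit_shadow_preimage_finite (h : Y) :
  finite_set [set l | orbit_shadow (l, h)].
Proof.
have [[l0 sl0h]|no_l] := pselect (exists l, orbit_shadow (l, h)); last first.
  by apply: (sub_finite_set _ (finite_set0 X)) => l slh; apply: no_l; exists l.
case: sl0h => g0 _ [r0 [_ r0rep] [_ g0r0]].
have := finite_index_orbit (near_finite_index r0).
move=> /(finite_image (act X g0)); apply: sub_finite_set.
move=> l [g _ [r [_ rrep] [<- gr]]].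
have rr0 : r = r0 := orbit_rep_act_inj rrep r0rep (etrans gr (esym g0r0)).
subst r; exists (act X (gmul (ginv g0) g) (near r0)).
  by exists (gmul (ginv g0) g) => //; rewrite /stab /= actM gr -g0r0 actK.
by rewrite -actM gmulA gmulgV gmul1g.
Qed.

Lemma orbit_shadow_domain_invariant : G_invariant orbit_shadow_domain.
Proof.
move=> g _ [[l h] slh <-]; exists (act X g l, act Y g h) => //.
exact: orbit_shadow_equivariant.
Qed.

End OrbitShadow.

Theorem lemma6p11 (G : group) (X Y : GBornCoarse G) (f : X -> Y) :
  is_morphism f ->
  weak_coarse_equiv f ->
  (exists2 U, entourage Y U &
     forall y : Y, exists x : X,
       [/\ thicken U [set y] (f x), stab x `<=` stab y & finite_index (stab x) (stab y)]) ->
  LF_almost_surjective f.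
Proof.
move=> [f_eq _ _] f_weq [U U_ent near_ex] H [H_inv H_lf].
have [V [V_ent V_inv] UV] := ent_Ginv_cofinal U_ent.
have /choice[near nearP] := near_ex.
have near_close y : V (f (near y), y) by have [[_ -> ?] _ _] := nearP y; apply: UV.
have near_fin y : finite_index (stab (near y)) (stab y) by have [] := nearP y.
have s_mv := orbit_shadow_multivalued near H_inv.
have s_ctrl := orbit_shadow_controlled f_eq V_inv near_close (H := H).
exists (orbit_shadow_domain near H).
  split; first exact: orbit_shadow_domain_invariant.
  apply: mv_domain_locally_finite V_ent s_mv s_ctrl H_lf _ _.
    by move=> B; apply: weak_coarse_equiv_bounded_image.
  exact: orbit_shadow_preimage_finite.
exists (orbit_shadow near H); split => //.
- exact: orbit_shadow_surjective.
- split; last exact: orbit_shadow_preimage_finite.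
  exact: mv_image_finite V_ent s_mv s_ctrl H_lf.
- exact: orbit_shadow_equivariant.
- by apply: ent_sub V_ent _ => _ [[l h] slh <-]; apply: s_ctrl.
Qed.
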